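(* Let $n\ge0$ and $\tau\in Y_n$. Then $\tau$ splits if and only if $\tau\in Y^{be}\cup Y^{bo}$. In particular, for $n\ge0$, $$\varphi(Y^{be}_{2n})=\{P\in\mathrm{NCP}_{2n}: P=Q_1\cup Q_2\text{ for some }Q_1,Q_2\in\mathrm{NCP}_n\}.$$
   Context: Planar binary trees: $Y_0=\{|\}$, $Y_n=\{\sigma\vee\tau:\sigma\in Y_k,\tau\in Y_l,k+l=n-1\}$ ($\sigma\vee\tau$: root with left subtree $\sigma$, right subtree $\tau$). The internal vertices of $\tau\in Y_n$ are numbered $1,\dots,n$ in left-to-right order (recursively: vertices of left subtree, root, vertices of right subtree). A right arm of $\tau$ is a class of the equivalence relation on vertices generated by ''$x$ is the right child of $y$''. $\tau$ splits if every right arm consists of numbers of the same parity. $Y^{be}$ and $Y^{bo}$ are defined jointly recursively by $Y^{be}=\{|\}\cup\{\sigma\vee\rho:\sigma\in Y^{bo},\rho\in Y^{be}\}$ and $Y^{bo}=\{\sigma\vee\rho:\sigma,\rho\in Y^{be}\}$; all trees in $Y^{be}$ have an even number of vertices and those in $Y^{bo}$ an odd number; $Y^{be}_{2n}$ is the set of elements of $Y^{be}$ with $2n$ vertices. $\mathrm{NCP}_n$: noncrossing partitions of $[n]$. For partitions $Q_1,Q_2$ of $[n]$, $Q_1\cup Q_2$ is the partition of $[2n]$ with blocks $\{2i-1:i\in V\}$ ($V\in Q_1$) and $\{2i:i\in W\}$ ($W\in Q_2$). $\varphi:Y\to\mathrm{NCP}$ sends $\tau\in Y_n$ to the partition of $[n]$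 whose blocks are the right arms of $\tau$ (equivalently $\varphi(|)=\emptyset$, $\varphi(\sigma\vee\tau)=\varphi(\sigma)*(|\,\underline*\,\varphi(\tau))$, with $*$ concatenation and $\underline*$ concatenation followed by merging the blocks containing the last elements of each part). *)

From mathcomp Require Import all_boot.
Set Implicit Arguments. Unset Strict Implicit. Unset Printing Implicit Defensive.

(* Planar binary trees: Leaf = |, Node s t = s \/ t. *)
Inductive tree : Type := Leaf | Node of tree & tree.

Fixpoint tree_size (t : tree) : nat :=
  match t with Leaf => 0 | Node l r => (tree_size l + tree_size r).+1 end.

(* Convention: internal vertices are numbered 0,...,n-1 (in-order, i.e. left
   subtree, root, right subtree); vertex k here is vertex k+1 of the paper.
   [rchild_pairs t off] lists the pairs (y, x) such that x is the right child
   of y, with numbering shifted by [off]. *)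
Fixpoint rchild_pairs (t : tree) (off : nat) : seq (nat * nat) :=
  match t with
  | Leaf => [::]
  | Node l r =>
      let root := off + tree_size l in
      rchild_pairs l off ++ rchild_pairs r root.+1 ++
      match r with
      | Leaf => [::]
      | Node rl _ => [:: (root, root.+1 + tree_size rl)]
      end
  end.

Definition rc_sym (t : tree) (m : nat) : rel 'I_m :=
  fun x y => ((val y, val x) \in rchild_pairs t 0) || ((val x, val y) \in rchild_pairs t 0).
Arguments rc_sym t m : clear implicits.

Definition phiN (t : tree) (m : nat) : {set {set 'I_m}} :=
  [set [set y : 'I_m | connect (rc_sym t m) x y] | x : 'I_m].
Arguments phiN t m : clear implicits.

Definition phi (t : tree) : {set {set 'I_(tree_size t)}} := phiN t (tree_size t).

(* tau splits: every right arm consists of numbers of the same parity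
   (the 0-based shift does not affect "same parity"). *)
Definition splits (t : tree) : Prop :=
  forall B, B \in phi t -> forall x y : 'I_(tree_size t), x \in B -> y \in B -> odd x = odd y.

Inductive Ybe : tree -> Prop :=
  | Ybe_leaf : Ybe Leaf
  | Ybe_node s r : Ybo s -> Ybe r -> Ybe (Node s r)
with Ybo : tree -> Prop :=
  | Ybo_node s r : Ybe s -> Ybe r -> Ybo (Node s r).

Definition noncrossing (m : nat) (P : {set {set 'I_m}}) : Prop :=
  forall (a b c d : 'I_m) (B B' : {set 'I_m}),
    a < b -> b < c -> c < d -> B \in P -> B' \in P ->
    a \in B -> c \in B -> b \in B' -> d \in B' -> B = B'.

Definition NCP (m : nat) (P : {set {set 'I_m}}) : Prop :=
  partition P [set: 'I_m] /\ noncrossing P.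

(* Q1 \cup Q2 : blocks {2i-1 : i in V} (V in Q1) and {2i : i in W} (W in Q2);
   0-based: paper's 2i-1 (i=1..n) is 2j (j=0..n-1), paper's 2i is 2j+1. *)
Definition emb_odd (n : nat) (V : {set 'I_n}) : {set 'I_(n.*2)} :=
  [set j : 'I_(n.*2) | [exists i in V, val j == (val i).*2]].
Definition emb_even (n : nat) (W : {set 'I_n}) : {set 'I_(n.*2)} :=
  [set j : 'I_(n.*2) | [exists i in W, val j == (val i).*2.+1]].

Definition pcup (n : nat) (Q1 Q2 : {set {set 'I_n}}) : {set {set 'I_(n.*2)}} :=
  [set emb_odd V | V in Q1] :|: [set emb_even W | W in Q2].

From mathcomp Require Import all_boot zify.

Set Implicit Arguments. Unset Strict Implicit. Unset Printing Implicit Defensive.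

(* Numbering the vertices in order, the right arm through x ends at
   [arm_last t 0 x], the last vertex of the subtree rooted at x; the right arms are
   the fibres of this map, and since every vertex between x and arm_last x lies
   in the right subtree of x, they form a noncrossing partition.  In [Node l r]
   the arm of the root runs from |l| to |l| + |r|, so a tree splits iff every
   right subtree has even size, which characterises Y^be (even size) and Y^bo
   (odd size).  Conversely every noncrossing partition of [0, m) is the
   partition into right arms of some tree: the root is the first element of the
   block of m - 1, and one recurses on both sides of it.  Finally a partition of
   [0, 2n) all of whose blocks have constant parity is the union of its
   restrictions to the even and to the odd numbers. *)

Fixpoint arm_last (t : tree) (off x : nat) : nat :=
  match t with
  | Leaf => x
  | Node l r =>
      let root := off + tree_size l in
      if x < root then arm_last l off x
      else if x == root then root + tree_size r
      else arm_last r root.+1 x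
  end.

Lemma arm_last_bounds t off x : off <= x < off + tree_size t ->
  x <= arm_last t off x < off + tree_size t.
Proof.
elim: t off x => [|l IHl r IHr] off x /=; first lia.
move=> Hx; case: (ltnP x (off + tree_size l)) => [lt_x|ge_x].
  by have := IHl off x; lia.
case: eqP => [|ne_x]; first lia.
by have := IHr (off + tree_size l).+1 x; lia.
Qed.

Lemma rchild_pairs_arm_last t off (a b : nat) : (a, b) \in rchild_pairs t off ->
  [/\ off <= a, a < b, b < off + tree_size t & arm_last t off a = arm_last t off b].
Proof.
elim: t off => [|l IHl r IHr] off //=.
rewrite !mem_cat => /or3P [/IHl [h1 h2 h3 ->] | /IHr [h1 h2 h3 h4] | ].
- by rewrite h3 (ltn_trans h2 h3); split=> //; lia.
- have [-> ->] : (a < off + tree_size l) = false /\ (b < off + tree_size l) = false.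
    by split; lia.
  have [-> ->] : (a == off + tree_size l) = false /\ (b == off + tree_size l) = false.
    by split; lia.
  by rewrite h4; split=> //; lia.
- case: r {IHr} => [|rl rr] //; rewrite inE => /eqP [-> ->] /=.
  set c := _.+1 + _; rewrite ltnn eqxx.
  have [-> ->] : (c < off + tree_size l) = false /\ (c == off + tree_size l) = false.
    by split; lia.
  by rewrite ltnn eqxx; split; lia.
Qed.

Lemma arm_last_rchild t off (x : nat) : off <= x < off + tree_size t ->
  x < arm_last t off x -> exists y, (x, y) \in rchild_pairs t off.
Proof.
elim: t off x => [|l IHl r IHr] off x /=; first lia.
move=> Hx; case: (ltnP x (off + tree_size l)) => [lt_x /(IHl off x) [|y Hy]|ge_x]; first lia.
  by exists y; rewrite mem_cat Hy.
case: eqP => [-> | ne_x /(IHr (off + tree_size l).+1 x) [|y Hy]]; last 2 first.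
- lia.
- by exists y; rewrite !mem_cat Hy orbT.
case: r {IHr Hx} => [|rl rr] /=; first by rewrite addn0 ltnn.
by exists ((off + tree_size l).+1 + tree_size rl); rewrite !mem_cat mem_head !orbT.
Qed.

Lemma arm_last_le t off x z : off <= x < off + tree_size t ->
  x <= z <= arm_last t off x -> arm_last t off z <= arm_last t off x.
Proof.
elim: t off x z => [|l IHl r IHr] off x z /=; first lia.
move=> Hx; case: (ltnP x (off + tree_size l)) => [lt_x Hz|ge_x].
  have bnd : x <= arm_last l off x < off + tree_size l by apply: arm_last_bounds; lia.
  have -> : z < off + tree_size l by lia.
  by apply: IHl; lia.
case: eqP => [eq_x Hz | ne_x Hz].
  case: ltnP => [|ge_z]; first lia.
  case: eqP => [|ne_z]; first lia.
  suff : z <= arm_last r (off + tree_size l).+1 z < (off + tree_size l).+1 + tree_size r by lia.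
  by apply: arm_last_bounds; lia.
have -> : z < off + tree_size l = false by lia.
have -> : (z == off + tree_size l) = false by lia.
by apply: IHr; lia.
Qed.

Lemma arm_last_idem t x : x < tree_size t ->
  arm_last t 0 (arm_last t 0 x) = arm_last t 0 x.
Proof.
move=> lt_x; have bnd := @arm_last_bounds t 0 x ltac:(lia).
have := @arm_last_bounds t 0 (arm_last t 0 x) ltac:(lia).
have := @arm_last_le t 0 x (arm_last t 0 x) ltac:(lia) ltac:(lia).
lia.
Qed.

Definition noncrossing_fun (T : eqType) (m : nat) (g : nat -> T) : Prop :=
  forall a b c d, a < b -> b < c -> c < d -> d < m ->
    g a = g c -> g b = g d -> g a = g b.

Definition parity_uniform (T : eqType) (m : nat) (g : nat -> T) : Prop :=
  forall x y, x < m -> y < m -> g x = g y -> odd x = odd y.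

Lemma noncrossing_fun_comp (T : eqType) m m' (g : nat -> T) (h : nat -> nat) :
  {homo h : x y / x < y} -> (forall x, x < m' -> h x < m) ->
  noncrossing_fun m g -> noncrossing_fun m' (g \o h).
Proof. by move=> h_mono h_lt g_nc a b c d ab bc cd dm; apply: g_nc; auto. Qed.

Lemma arm_last_noncrossing t : noncrossing_fun (tree_size t) (arm_last t 0).
Proof.
move=> a b c d ab bc cd dm ac bd.
have := @arm_last_bounds t 0 a ltac:(lia); have := @arm_last_bounds t 0 b ltac:(lia).
have := @arm_last_bounds t 0 c ltac:(lia); have := @arm_last_bounds t 0 d ltac:(lia).
have := @arm_last_le t 0 a b ltac:(lia); have := @arm_last_le t 0 b c ltac:(lia).
lia.
Qed.

Section RightArms.
Variables (t : tree) (m : nat).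
Hypothesis size_t : tree_size t = m.

Lemma connect_arm_last (x : 'I_m) (z : 'I_m) :
  val z = arm_last t 0 x -> connect (rc_sym t m) x z.
Proof.
have [k] := ubnP (arm_last t 0 x - x); elim: k x => // k IHk x lt_k eq_z.
have lt_xm := ltn_ord x.
have bnd := @arm_last_bounds t 0 x ltac:(lia).
have [le_x | lt_x] := leqP (arm_last t 0 x) x.
  by have -> : z = x by apply: val_inj; rewrite /= eq_z; lia.
have [y x_y] := @arm_last_rchild t 0 x ltac:(lia) lt_x.
have [_ lt_xy lt_y eq_xy] := rchild_pairs_arm_last x_y.
have lt_ym : y < m by lia.
apply: connect_trans (connect1 _) (IHk (Ordinal lt_ym) _ _); last by rewrite /= -eq_xy.
  by rewrite /rc_sym /= x_y orbT.
by rewrite /= -eq_xy; lia.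
Qed.

Lemma connect_rc_sym (x y : 'I_m) :
  connect (rc_sym t m) x y = (arm_last t 0 x == arm_last t 0 y).
Proof.
have sym_rc : connect_sym (rc_sym t m) by apply: sym_connect_sym => u v; rewrite /rc_sym orbC.
apply/idP/eqP => [|eq_xy].
  pose arm := [pred z : 'I_m | arm_last t 0 z == arm_last t 0 x].
  have arm_closed : closed (rc_sym t m) arm.
    by move=> u v /orP [] /rchild_pairs_arm_last [_ _ _ eq_uv]; rewrite !inE eq_uv.
  by move/(closed_connect arm_closed); rewrite !inE eqxx => /esym/eqP.
have lt_xm := ltn_ord x.
have lt_last : arm_last t 0 x < m by have := @arm_last_bounds t 0 x ltac:(lia); lia.
apply: (connect_trans (connect_arm_last (z := Ordinal lt_last) _)) => //.
by rewrite sym_rc; apply: connect_arm_last; rewrite /= eq_xy.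
Qed.

End RightArms.

Definition fun_partition (T : eqType) (m : nat) (g : nat -> T) : {set {set 'I_m}} :=
  preim_partition (fun i : 'I_m => g i) [set: 'I_m].

Section FunPartition.
Variables (T : eqType) (m : nat) (g : nat -> T).

Lemma fun_partition_block (x : 'I_m) : [set y : 'I_m | g x == g y] \in fun_partition m g.
Proof. by apply/imsetP; exists x => //; apply/setP => y; rewrite !inE. Qed.

Lemma fun_partitionP B :
  B \in fun_partition m g -> exists x : 'I_m, B = [set y : 'I_m | g x == g y].
Proof. by move=> /imsetP [x _ ->]; exists x; apply/setP => y; rewrite !inE. Qed.

Lemma fun_partition_NCP : noncrossing_fun m g -> NCP (fun_partition m g).
Proof.
move=> g_nc; split; first exact: preim_partitionP.
move=> a b c d B B' ab bc cd /fun_partitionP [x ->] /fun_partitionP [x' ->].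
rewrite !inE => /eqP xa /eqP xc /eqP xb /eqP xd.
suff eq_x : g x = g x' by apply/setP => y; rewrite !inE eq_x.
by rewrite xa xb; apply: (g_nc a b c d) => //; congruence.
Qed.

Lemma fun_partition_parity : parity_uniform m g <->
  forall B, B \in fun_partition m g -> forall x y : 'I_m, x \in B -> y \in B -> odd x = odd y.
Proof.
split=> [g_par B /fun_partitionP [z ->] x y | B_par x y lt_x lt_y eq_xy].
  by rewrite !inE => /eqP zx /eqP zy; apply: g_par; rewrite // -zx -zy.
apply: (B_par _ (fun_partition_block (Ordinal lt_x)) (Ordinal lt_x) (Ordinal lt_y)).
  by rewrite inE.
by rewrite inE /= eq_xy.
Qed.

End FunPartition.

Lemma eq_fun_partition (T T' : eqType) m (g : nat -> T) (h : nat -> T') :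
  (forall x y, x < m -> y < m -> (g x == g y) = (h x == h y)) ->
  fun_partition m g = fun_partition m h.
Proof.
move=> eq_gh; apply: eq_in_imset => x _; apply/setP => y.
by rewrite !inE eq_gh.
Qed.

Lemma phiN_fun_partition t m : tree_size t = m -> phiN t m = fun_partition m (arm_last t 0).
Proof.
move=> size_t; apply/setP => B; apply/imsetP/imsetP => [] [x _ ->]; exists x => //;
  by apply/setP => y; rewrite !inE connect_rc_sym.
Qed.

Lemma phiN_NCP t m : tree_size t = m -> NCP (phiN t m).
Proof.
move=> size_t; rewrite phiN_fun_partition //; apply: fun_partition_NCP.
by rewrite -size_t; apply: arm_last_noncrossing.
Qed.

Section ParityPartition.
Variables (T : eqType) (n : nat) (g : nat -> T).
Hypothesis g_par : parity_uniform n.*2 g.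

Lemma emb_odd_block (i : 'I_n) :
  emb_odd [set j : 'I_n | g i.*2 == g j.*2] = [set y : 'I_(n.*2) | g i.*2 == g y].
Proof.
have lt_i := ltn_ord i.
apply/setP => y; rewrite !inE; apply/existsP/eqP => [[j] | eq_iy].
  by rewrite inE => /andP [/eqP -> /eqP ->].
have ltn_y := ltn_ord y.
have even_y : odd y = false by rewrite -(g_par _ _ eq_iy) ?odd_double //; lia.
have lt_half : y./2 < n by lia.
exists (Ordinal lt_half); rewrite inE /=.
by have := odd_double_half y; rewrite even_y add0n => ->; rewrite eq_iy !eqxx.
Qed.

Lemma emb_even_block (i : 'I_n) :
  emb_even [set j : 'I_n | g i.*2.+1 == g j.*2.+1] = [set y : 'I_(n.*2) | g i.*2.+1 == g y].
Proof.
have lt_i := ltn_ord i.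
apply/setP => y; rewrite !inE; apply/existsP/eqP => [[j] | eq_iy].
  by rewrite inE => /andP [/eqP -> /eqP ->].
have ltn_y := ltn_ord y.
have odd_y : odd y by rewrite -(g_par _ _ eq_iy) /= ?odd_double //; lia.
have lt_half : y./2 < n by lia.
exists (Ordinal lt_half); rewrite inE /=.
by have := odd_double_half y; rewrite odd_y add1n => ->; rewrite eq_iy !eqxx.
Qed.

Lemma fun_partition_pcup :
  fun_partition n.*2 g =
  pcup (fun_partition n (g \o double)) (fun_partition n (g \o (fun i => i.*2.+1))).
Proof.
apply/setP => B; rewrite inE; apply/idP/orP => [/fun_partitionP [x ->] | ].
  have lt_half : x./2 < n by have := ltn_ord x; lia.
  have := odd_double_half x; case: (odd x) => /= [|/[!add0n]] def_x.
    right; apply/imsetP; exists [set j : 'I_n | g (Ordinal lt_half).*2.+1 == g j.*2.+1].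
      exact: (fun_partition_block (g \o (fun i => i.*2.+1))).
    by rewrite emb_even_block /= -add1n def_x.
  left; apply/imsetP; exists [set j : 'I_n | g (Ordinal lt_half).*2 == g j.*2].
    exact: (fun_partition_block (g \o double)).
  by rewrite emb_odd_block /= def_x.
case=> /imsetP [V /fun_partitionP [i ->] ->] /=.
  have lt_x : i.*2 < n.*2 by rewrite ltn_double.
  by rewrite emb_odd_block (fun_partition_block g (Ordinal lt_x)).
have lt_x : i.*2.+1 < n.*2 by rewrite ltn_Sdouble.
by rewrite emb_even_block (fun_partition_block g (Ordinal lt_x)).
Qed.

End ParityPartition.

Lemma pcup_parity n (Q1 Q2 : {set {set 'I_n}}) B (x y : 'I_(n.*2)) :
  B \in pcup Q1 Q2 -> x \in B -> y \in B -> odd x = odd y.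
Proof.
rewrite inE => /orP [] /imsetP [V _ ->]; rewrite !inE =>
  /existsP [a /andP [_ /eqP ->]] /existsP [b /andP [_ /eqP ->]] /=.
all: by rewrite !odd_double.
Qed.

Fixpoint even_right (t : tree) : bool :=
  match t with
  | Leaf => true
  | Node l r => [&& even_right l, even_right r & ~~ odd (tree_size r)]
  end.

Lemma even_rightP t off : even_right t <->
  forall x, off <= x < off + tree_size t -> odd (arm_last t off x) = odd x.
Proof.
elim: t off => [|l IHl r IHr] off //=.
split=> [/and3P [/(IHl off) par_l /(IHr (off + tree_size l).+1) par_r even_r] x Hx
        | par_t].
  case: ltnP => [lt_x|ge_x]; first by apply: par_l; lia.
  case: eqP => [->|ne_x]; first by rewrite oddD (negbTE even_r) addbF.
  by apply: par_r; lia.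
apply/and3P; split.
- apply/(IHl off) => x Hx; have := par_t x ltac:(lia).
  by have -> : x < off + tree_size l by lia.
- apply/(IHr (off + tree_size l).+1) => x Hx; have := par_t x ltac:(lia).
  have -> : x < off + tree_size l = false by lia.
  by have -> : (x == off + tree_size l) = false by lia.
- have := par_t (off + tree_size l) ltac:(lia).
  by rewrite ltnn eqxx oddD; case: (odd (tree_size r)); case: (odd _).
Qed.

Lemma parity_uniform_arm_last t :
  parity_uniform (tree_size t) (arm_last t 0) <-> even_right t.
Proof.
rewrite (even_rightP _ 0); split=> [t_par x lt_x | t_par x y lt_x lt_y eq_xy].
  have := @arm_last_bounds t 0 x lt_x => bnd.
  by apply: t_par; rewrite ?arm_last_idem //; lia.
by rewrite -t_par // -(t_par y) // eq_xy.
Qed.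

Lemma Ybe_Ybo_even_right t :
  (Ybe t <-> even_right t && ~~ odd (tree_size t)) /\
  (Ybo t <-> even_right t && odd (tree_size t)).
Proof.
elim: t => [|l [IHl_e IHl_o] r [IHr_e _]].
  by split; split => // H; [exact: Ybe_leaf | inversion H].
rewrite /= negbK oddD; split; split.
- inversion 1; subst.
  by move/IHl_o: H2 => /andP [-> ->]; move/IHr_e: H3 => /andP [-> /negbTE ->].
- case/andP => /and3P [el er /negbTE or]; rewrite or addbF => ol.
  by apply: Ybe_node; [apply/IHl_o | apply/IHr_e]; rewrite ?el ?er ?ol ?or.
- inversion 1; subst.
  by move/IHl_e: H2 => /andP [-> /negbTE ->]; move/IHr_e: H3 => /andP [-> /negbTE ->].
- case/andP => /and3P [el er /negbTE or]; rewrite or addbF => /negbTE ol.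
  by apply: Ybo_node; [apply/IHl_e | apply/IHr_e]; rewrite ?el ?er ?ol ?or.
Qed.

Lemma even_right_Ybe_Ybo t : even_right t <-> Ybe t \/ Ybo t.
Proof.
have [[Ybe_er er_Ybe] [Ybo_er er_Ybo]] := Ybe_Ybo_even_right t.
split=> [er | [/Ybe_er | /Ybo_er] /andP [] //].
by case odd_t: (odd (tree_size t)); [right; apply: er_Ybo | left; apply: er_Ybe];
  rewrite er odd_t.
Qed.

Lemma splits_Ybe_Ybo t : splits t <-> Ybe t \/ Ybo t.
Proof.
rewrite -even_right_Ybe_Ybo -parity_uniform_arm_last fun_partition_parity.
by rewrite /splits /phi phiN_fun_partition.
Qed.

Section NoncrossingTree.
Variables (T : eqType) (m : nat) (g : nat -> T).
Hypothesis g_nc : noncrossing_fun m g.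

(* The root of the tree built on [lo, hi): its right arm must end at hi - 1. *)
Definition arm_head lo hi : nat := lo + find (fun y => g y == g hi.-1) (iota lo (hi - lo)).

Fixpoint noncrossing_tree (fuel lo hi : nat) : tree :=
  if fuel is fuel'.+1 then
    if lo < hi then Node (noncrossing_tree fuel' lo (arm_head lo hi)) (noncrossing_tree fuel' (arm_head lo hi).+1 hi)
    else Leaf
  else Leaf.

Lemma arm_headP lo hi : lo < hi ->
  [/\ lo <= arm_head lo hi < hi, g (arm_head lo hi) = g hi.-1
    & forall y, lo <= y < arm_head lo hi -> g y != g hi.-1].
Proof.
rewrite /arm_head => lt_lo; set p := fun y => g y == g hi.-1.
have has_p : has p (iota lo (hi - lo)) by apply/hasP; exists hi.-1; rewrite ?mem_iota /p //; lia.
have := has_p; rewrite has_find size_iota => lt_find.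
split; first lia.
  by apply/eqP; have := nth_find 0 has_p; rewrite nth_iota.
move=> y Hy; have lt_y : y - lo < find p (iota lo (hi - lo)) by lia.
have := before_find 0 lt_y; rewrite nth_iota; last lia.
by rewrite subnKC; [move/negbT | lia].
Qed.

Lemma arm_head_separates lo hi x y : lo < hi -> hi <= m ->
  lo <= x < arm_head lo hi -> arm_head lo hi <= y < hi -> g x != g y.
Proof.
move=> lt_lo le_hi Hx Hy; have [bnd g_head head_min] := arm_headP lt_lo.
apply: contraNneq (head_min x Hx) => eq_xy; apply/eqP.
have [lt_y | ge_y] := ltnP y hi.-1; last by rewrite eq_xy (_ : y = hi.-1) //; lia.
have [eq_y | ne_y] := eqVneq y (arm_head lo hi); first by rewrite eq_xy eq_y.
by rewrite -g_head (@g_nc x (arm_head lo hi) y hi.-1) //; lia.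
Qed.

Definition class_max lo hi x r : Prop :=
  [/\ lo <= r < hi, g r = g x & forall y, lo <= y < hi -> g y = g x -> y <= r].

Lemma noncrossing_tree_spec fuel lo hi : hi - lo <= fuel -> hi <= m ->
  tree_size (noncrossing_tree fuel lo hi) = hi - lo /\
  forall x, lo <= x < hi -> class_max lo hi x (arm_last (noncrossing_tree fuel lo hi) lo x).
Proof.
elim: fuel lo hi => [|fuel IH] lo hi le_fuel le_hi /=.
  by split=> [|x]; lia.
case: ltnP => [lt_lo | ge_lo]; last by split=> [|x] /=; lia.
have [bnd g_head head_min] := arm_headP lt_lo.
set k := arm_head lo hi in bnd g_head head_min *.
have [size_l arm_l] := IH lo k ltac:(lia) ltac:(lia).
have [size_r arm_r] := IH k.+1 hi ltac:(lia) le_hi.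
split=> [|x Hx]; first by rewrite /= size_l size_r; lia.
rewrite /= size_l subnKC; last lia.
case: ltnP => [lt_x | ge_x].
  have [r_bnd g_r r_max] := arm_l x ltac:(lia).
  split=> [||y Hy g_y]; [lia | done |].
  have [lt_y | ge_y] := ltnP y k; first by apply: r_max => //; lia.
  have := @arm_head_separates lo hi x y lt_lo le_hi ltac:(lia) ltac:(lia).
  by rewrite g_y eqxx.
case: eqP => [eq_x | ne_x].
  rewrite size_r (_ : k + (hi - k.+1) = hi.-1); last lia.
  by split=> [||y Hy _]; [lia | rewrite eq_x | lia].
have [r_bnd g_r r_max] := arm_r x ltac:(lia).
have le_x := r_max x ltac:(lia) erefl.
split=> [||y Hy g_y]; [lia | done |].
by have [le_y | lt_y] := leqP y k; [lia | apply: r_max => //; lia].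
Qed.

Lemma noncrossing_tree_arm_last :
  tree_size (noncrossing_tree m 0 m) = m /\
  forall x y, x < m -> y < m ->
    (arm_last (noncrossing_tree m 0 m) 0 x == arm_last (noncrossing_tree m 0 m) 0 y) = (g x == g y).
Proof.
have [size_t arm_t] := @noncrossing_tree_spec m 0 m ltac:(lia) (leqnn m).
split=> [|x y lt_x lt_y]; first by rewrite size_t subn0.
have [x_bnd g_rx rx_max] := arm_t x ltac:(lia).
have [y_bnd g_ry ry_max] := arm_t y ltac:(lia).
set rx := arm_last _ 0 x in x_bnd g_rx rx_max *.
set ry := arm_last _ 0 y in y_bnd g_ry ry_max *.
apply/eqP/eqP => [eq_r | eq_xy]; first by rewrite -g_rx eq_r g_ry.
have : ry <= rx by apply: rx_max; [lia | rewrite g_ry].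
have : rx <= ry by apply: ry_max; [lia | rewrite g_rx].
lia.
Qed.

End NoncrossingTree.

Definition block_label m (P : {set {set 'I_m}}) (x : nat) : option {set 'I_m} :=
  omap (pblock P) (insub x).

Lemma block_label_lt m (P : {set {set 'I_m}}) x (lt_x : x < m) :
  block_label P x = Some (pblock P (Ordinal lt_x)).
Proof. by rewrite /block_label insubT. Qed.

Lemma NCP_block_label m (P : {set {set 'I_m}}) : NCP P ->
  noncrossing_fun m (block_label P) /\ fun_partition m (block_label P) = P.
Proof.
case=> partP ncP; have [/eqP cover_P _ _] := and3P partP.
have in_block (x : 'I_m) : x \in pblock P x by rewrite mem_pblock cover_P inE.
have block_in (x : 'I_m) : pblock P x \in P by rewrite pblock_mem // cover_P inE.
split=> [a b c d ab bc cd dm | ].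
  have [lt_a lt_b lt_c] : [/\ a < m, b < m & c < m] by split; lia.
  rewrite !(block_label_lt P lt_a, block_label_lt P lt_b, block_label_lt P lt_c, block_label_lt P dm).
  move=> [ac] [bd]; congr Some.
  apply: (ncP (Ordinal lt_a) (Ordinal lt_b) (Ordinal lt_c) (Ordinal dm));
    by rewrite ?block_in ?in_block // ?ac ?bd in_block.
rewrite -{2}(preim_partition_pblock partP); apply: eq_in_imset => x _.
by apply/setP => y; rewrite !inE /block_label !valK.
Qed.

Lemma phiN_onto_NCP m (P : {set {set 'I_m}}) : NCP P ->
  exists t, tree_size t = m /\ phiN t m = P.
Proof.
move=> /NCP_block_label [nc_P def_P].
have [size_t arm_t] := noncrossing_tree_arm_last nc_P.
exists (noncrossing_tree (block_label P) m 0 m); split=> //.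
by rewrite phiN_fun_partition // -{2}def_P; apply: eq_fun_partition.
Qed.

Theorem lemma4 :
  (forall (n : nat) (t : tree), tree_size t = n -> (splits t <-> (Ybe t \/ Ybo t))) /\
  (forall (n : nat) (P : {set {set 'I_(n.*2)}}),
     (exists t : tree, [/\ Ybe t, tree_size t = n.*2 & phiN t (n.*2) = P]) <->
     (NCP P /\ exists Q1 Q2 : {set {set 'I_n}}, [/\ NCP Q1, NCP Q2 & P = pcup Q1 Q2])).
Proof.
split=> [n t _ | n P]; first exact: splits_Ybe_Ybo.
split=> [[t [Ybe_t size_t <-]] | [NCP_P [Q1 [Q2 [_ _ def_P]]]]].
  have par_t : parity_uniform n.*2 (arm_last t 0).
    by rewrite -size_t parity_uniform_arm_last even_right_Ybe_Ybo; left.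
  have nc_t : noncrossing_fun n.*2 (arm_last t 0).
    by rewrite -size_t; apply: arm_last_noncrossing.
  split; first exact: phiN_NCP.
  rewrite phiN_fun_partition // fun_partition_pcup //.
  by do 2!eexists; split; last reflexivity; apply: fun_partition_NCP;
    apply: noncrossing_fun_comp nc_t => [x y|x]; rewrite /= ?ltnS ?ltn_double ?ltn_Sdouble.
have [t [size_t phi_t]] := phiN_onto_NCP NCP_P.
have : even_right t.
  rewrite -parity_uniform_arm_last size_t fun_partition_parity.
  by rewrite -phiN_fun_partition // phi_t def_P => B PB x y; apply: pcup_parity PB.
move/even_right_Ybe_Ybo => [Ybe_t | Ybo_t]; first by exists t.
by have := (Ybe_Ybo_even_right t).2.1 Ybo_t; rewrite size_t odd_double andbF.
Qed.
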